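(* For every integer $m\ge 1$, the function $f:2^V\to\mathbb{R}$, $f(A)=\sum_{v\in V}m_A(v)$, is non-decreasing and submodular: for all $A\subseteq B\subseteq V$, $f(A)\le f(B)$, and for all $x\in V\setminus B$, $f(B\cup\{x\})-f(B)\le f(A\cup\{x\})-f(A)$.
   Context: $G=(V,E)$ is a finite simple undirected graph, $N(v)$ the neighborhood of $v$, $N_C(v)=N(v)\cap C$. $m_A(v)=m$ if [$v\notin A$ and $|N_A(v)|\ge m$] or [$v\in A$ and $|N_A(v)|>0$]; $m_A(v)=m-1$ if $v\in A$ and $|N_A(v)|=0$; and $m_A(v)=|N_A(v)|$ otherwise. *)

From mathcomp Require Import all_boot all_order all_algebra.
Set Implicit Arguments. Unset Strict Implicit. Unset Printing Implicit Defensive.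
Import Order.TTheory GRing.Theory Num.Theory.

Definition simple_graph (T : finType) (e : rel T) : Prop :=
  symmetric e /\ irreflexive e.

Definition nbhd (T : finType) (e : rel T) (v : T) : {set T} := [set u | e v u].

Definition nbhd_in (T : finType) (e : rel T) (C : {set T}) (v : T) : {set T} :=
  nbhd e v :&: C.

Definition mA (T : finType) (e : rel T) (m : nat) (A : {set T}) (v : T) : nat :=
  let k := #|nbhd_in e A v| in
  if v \notin A then (if m <= k then m else k)
  else (if 0 < k then m else m.-1).

Definition fm (T : finType) (e : rel T) (m : nat) (A : {set T}) : int :=
  (\sum_(v : T) mA e m A v)%:Z.

From mathcomp Require Import all_boot all_order all_algebra.
From mathcomp Require Import zify.
Import Order.TTheory GRing.Theory Num.Theory.
Local Open Scope ring_scope.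

(* [m_A(v)] depends only on whether [v \in A] and on [k = |N_A(v)|], through
   the piecewise function [mval] below.  Adding [x] to a set [S] adds at most
   one neighbour to each [N_S(v)], so both claims reduce to a finite case
   analysis on [mval], which is monotone in both arguments and has
   decreasing increments in [k]; summing over [v] gives the theorem. *)

Definition mval (m : nat) (inS : bool) (k : nat) : nat :=
  if ~~ inS then (if (m <= k)%N then m else k) else (if (0 < k)%N then m else m.-1).

Lemma mAE (T : finType) (e : rel T) m S v :
  mA e m S v = mval m (v \in S) #|nbhd_in e S v|.
Proof. by []. Qed.

Lemma mval_mono m (inA inB : bool) a b :
  (inA -> inB) -> (a <= b)%N -> (mval m inA a <= mval m inB b)%N.
Proof.
rewrite /mval; case: inA; case: inB => //= AB; try by have := AB isT.
all: by repeat case: ifP; lia.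
Qed.

(* [isx] says that [v] is the added vertex [x] itself (then [v] is not an
   [x]-neighbour and lies outside [B]); [adj] says [v] is adjacent to [x]. *)
Lemma mval_submod m (inA inB isx adj : bool) a b :
  (inA -> inB) -> (a <= b)%N -> (isx -> ~~ adj && ~~ inB) ->
  (mval m (isx || inB) (b + adj) + mval m inA a
     <= mval m (isx || inA) (a + adj) + mval m inB b)%N.
Proof.
rewrite /mval => AB ab; case: inA inB isx adj AB => [] [] [] [] //= AB;
  try by have := AB isT.
all: move=> xB; try by have := xB isT.
all: by repeat case: ifP; lia.
Qed.

Lemma card_nbhd_inU1 (T : finType) (e : rel T) (S : {set T}) x v :
  x \notin S -> #|nbhd_in e (x |: S) v| = (#|nbhd_in e S v| + e v x)%N.
Proof.
move=> xS; rewrite /nbhd_in setIUr.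
have [exv|nexv] := boolP (e v x).
- have -> : nbhd e v :&: [set x] = [set x].
    by apply/setP=> y; rewrite !inE andbC; case: eqP => // ->.
  by rewrite cardsU1 !inE (negbTE xS) andbF addn1.
- have -> : nbhd e v :&: [set x] = set0.
    by apply/setP=> y; rewrite !inE andbC; case: eqP => // ->; rewrite (negbTE nexv).
  by rewrite set0U addn0.
Qed.

Lemma card_nbhd_inS (T : finType) (e : rel T) (A B : {set T}) v :
  A \subset B -> (#|nbhd_in e A v| <= #|nbhd_in e B v|)%N.
Proof. by move=> AB; apply: subset_leq_card; rewrite /nbhd_in setIS. Qed.

Lemma fm_mono (T : finType) (e : rel T) m (A B : {set T}) :
  A \subset B -> fm e m A <= fm e m B.
Proof.
move=> AB; rewrite /fm lez_nat; apply: leq_sum => v _; rewrite !mAE.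
by apply: mval_mono; [exact: (subsetP AB) | exact: card_nbhd_inS].
Qed.

Lemma fm_submod (T : finType) (e : rel T) m (A B : {set T}) x :
  irreflexive e -> A \subset B -> x \notin B ->
  fm e m (x |: B) - fm e m B <= fm e m (x |: A) - fm e m A.
Proof.
move=> irr AB xB; have xA : x \notin A by apply: contra xB; apply: (subsetP AB).
rewrite /fm lerBlDr addrAC lerBrDr -!PoszD lez_nat -!big_split /=.
apply: leq_sum => v _; rewrite !mAE !card_nbhd_inU1 // !in_setU1.
apply: mval_submod; [exact: (subsetP AB) | exact: card_nbhd_inS |].
by move/eqP=> ->; rewrite irr xB.
Qed.

Theorem mainTheorem8 (T : finType) (e : rel T) (m : nat) :
  simple_graph e -> (1 <= m)%N ->
  forall A B : {set T}, A \subset B ->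
    fm e m A <= fm e m B /\
    (forall x : T, x \notin B ->
       fm e m (x |: B) - fm e m B <= fm e m (x |: A) - fm e m A).
Proof.
move=> [_ irr] _ A B AB; split; first exact: fm_mono.
by move=> x xB; apply: fm_submod.
Qed.
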